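(* Let $\ell\ge 1$ be an integer and let $q_1,\dots,q_\ell:\mathbb{N}\to\mathbb{N}$ be increasing functions taking integer values on the integers, with $l\le q_1(l)<q_2(l)<\dots<q_\ell(l)$ for all $l\ge 1$. For each $n\ge1$ let $p_n\in(0,1)$ and let $\xi^{(n)}_1,\xi^{(n)}_2,\xi^{(n)}_3,\dots$ be independent random variables with $P\{\xi^{(n)}_i=1\}=p_n=1-P\{\xi^{(n)}_i=0\}$. Set $$S_n=\sum_{l=1}^n \xi^{(n)}_{q_1(l)}\xi^{(n)}_{q_2(l)}\cdots\xi^{(n)}_{q_\ell(l)},\qquad \lambda_n=np_n^\ell .$$ Then for every $\lambda>0$ and every $n\ge1$, $$\sup_{\Gamma\subset\mathbb{Z}_+}\big|P\{S_n\in\Gamma\}-P_\lambda(\Gamma)\big|\le (2\ell^2+1)p_n+2|\lambda-\lambda_n|e^{\max(\lambda,\lambda_n)},$$ where $P_\lambda(\Gamma)=\sum_{l\in\Gamma}e^{-\lambda}\lambda^l/l!$. In particular, if $\lim_{n\to\infty}np_n^\ell=\lambda>0$, the right-hand side tends to $0$ and $S_n$ converges in distribution to a Poisson random variable with parameter $\lambda$.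
   Context: $\mathbb{Z}_+$ denotes the set of nonnegative integers; $P_\lambda(\Gamma)$ is the probability assigned to $\Gamma\subset\mathbb{Z}_+$ by the Poisson distribution with parameter $\lambda$. *)

From Stdlib Require Import Reals Lra Lia Arith.
Open Scope R_scope.

(* An outcome: omega i = true iff xi_i = 1 (coordinates indexed by nat;
   only coordinates 1..m are random in [bern_expect p m], the rest are 0). *)
Definition upd (omega : nat -> bool) (k : nat) (b : bool) : nat -> bool :=
  fun i => if Nat.eqb i k then b else omega i.

Fixpoint bern_expect (p : R) (m : nat) (F : (nat -> bool) -> R) : R :=
  match m with
  | O => F (fun _ => false)
  | S m' => p * bern_expect p m' (fun w => F (upd w (S m') true))
            + (1 - p) * bern_expect p m' (fun w => F (upd w (S m') false))
  end.

Definition b2n (b : bool) : nat := if b then 1%nat else 0%nat.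

(* xi_{q_0(l)} * ... * xi_{q_(k-1)(l)}  (q j = q_{j+1} of the paper) *)
Fixpoint prod_xi (omega : nat -> bool) (q : nat -> nat -> nat) (l k : nat) : nat :=
  match k with
  | O => 1%nat
  | S k' => (b2n (omega (q k' l)) * prod_xi omega q l k')%nat
  end.

Fixpoint S_sum (omega : nat -> bool) (q : nat -> nat -> nat) (ell n : nat) : nat :=
  match n with
  | O => 0%nat
  | S n' => (prod_xi omega q (S n') ell + S_sum omega q ell n')%nat
  end.

(* P{S_n in Gamma}: S_n only involves xi_i with i <= q_ell(n), so it suffices
   to randomize coordinates 1..q_ell(n). *)
Definition prob_Sn_in (p : R) (q : nat -> nat -> nat) (ell n : nat)
    (Gamma : nat -> bool) : R :=
  bern_expect p (q (ell - 1)%nat n)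
    (fun w => if Gamma (S_sum w q ell n) then 1 else 0).

Definition poisson_term (lam : R) (Gamma : nat -> bool) (l : nat) : R :=
  if Gamma l then exp (- lam) * lam ^ l / INR (fact l) else 0.

From Stdlib Require Import Reals Lra Lia Arith FunctionalExtensionality Classical_Prop.
Open Scope R_scope.

(* - Poisson distribution: P_lam(Gamma) converges, and the Poisson cdf
     satisfies a tail estimate and a head estimate.
   - Stein's equation lam g(k+1) - k g(k) = 1_Gamma(k) - P_lam(Gamma) has an
     explicit solution g with |g(a) - g(b)| <= |a - b| / lam on k >= 1.
   - Bernoulli expectations are linear and monotone, and conditioning one
     coordinate on the value 1 costs a factor p.
   - For W = S_n and mu = n p^ell, size biasing gives
       P(W in Gamma) - P_mu(Gamma) = p^ell sum_l E[g(W + 1) - g(W^(l))],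
     where W^(l) is W with block l forced to 1; since distinct blocks share
     at most ell^2 coordinates in total, E|W + 1 - W^(l)| <= p^ell + ell^2 p,
     whence |P(S_n in Gamma) - P_mu(Gamma)| <= p^ell + ell^2 p.
   - Moving the parameter from mu to lam changes P(Gamma) by at most
     2 |lam - mu| e^max(lam, mu).
   Theorem 2.1 combines the last two bounds (using p^ell <= p); the limit
   statement follows because n p_n^ell -> lam forces p_n -> 0. *)

Lemma cv_le_eventually (u : nat -> R) (a c : R) (K : nat) :
  Un_cv u a -> (forall N, (K <= N)%nat -> u N <= c) -> a <= c.
Proof.
  intros Hu Hb. destruct (Rle_or_lt a c) as [h|h]; auto.
  destruct (Hu (a - c)) as [N HN]; [lra|].
  specialize (HN (max N K) ltac:(lia)). specialize (Hb (max N K) ltac:(lia)).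
  unfold Rdist in HN. apply Rabs_def2 in HN. lra.
Qed.

Lemma cv_ge_eventually (u : nat -> R) (a c : R) (K : nat) :
  Un_cv u a -> (forall N, (K <= N)%nat -> c <= u N) -> c <= a.
Proof.
  intros Hu Hb. destruct (Rle_or_lt c a) as [h|h]; auto.
  destruct (Hu (c - a)) as [N HN]; [lra|].
  specialize (HN (max N K) ltac:(lia)). specialize (Hb (max N K) ltac:(lia)).
  unfold Rdist in HN. apply Rabs_def2 in HN. lra.
Qed.

Lemma exp_monotone x y : x <= y -> exp x <= exp y.
Proof. intros [h|h]; [left; apply exp_increasing; auto | subst; lra]. Qed.

(** * The Poisson distribution *)

Definition poisson_pmf (lam : R) (k : nat) : R := exp (- lam) * lam ^ k / INR (fact k).
Definition poisson_cdf (lam : R) (k : nat) : R := sum_f_R0 (poisson_pmf lam) k.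
Definition poisson_partial (lam : R) (G : nat -> bool) (k : nat) : R :=
  sum_f_R0 (poisson_term lam G) k.

Lemma poisson_pmf_pos lam k : 0 < lam -> 0 < poisson_pmf lam k.
Proof.
  intros H; unfold poisson_pmf. apply Rdiv_lt_0_compat; [|apply INR_fact_lt_0].
  apply Rmult_lt_0_compat; [apply exp_pos | apply pow_lt; lra].
Qed.

Lemma poisson_pmf_succ lam k :
  poisson_pmf lam (S k) = poisson_pmf lam k * lam / INR (S k).
Proof.
  unfold poisson_pmf. rewrite fact_simpl, mult_INR. simpl pow.
  assert (INR (fact k) <> 0) by apply INR_fact_neq_0.
  assert (INR (S k) <> 0) by (apply not_0_INR; lia).
  field; auto.
Qed.

Lemma poisson_pmf_rec lam k : lam * poisson_pmf lam k = INR (S k) * poisson_pmf lam (S k).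
Proof.
  rewrite poisson_pmf_succ. assert (0 < INR (S k)) by (apply lt_0_INR; lia).
  field; lra.
Qed.

Lemma poisson_term_bounds lam G k :
  0 < lam -> 0 <= poisson_term lam G k <= poisson_pmf lam k.
Proof.
  intros H; unfold poisson_term. pose proof (poisson_pmf_pos lam k H).
  unfold poisson_pmf in *. destruct (G k); lra.
Qed.

Lemma poisson_cdf_cv lam : Un_cv (poisson_cdf lam) 1.
Proof.
  assert (Hexp : infinite_sum (fun i => / INR (fact i) * lam ^ i) (exp lam)).
  { unfold exp; destruct (exist_exp lam) as [l Hl]; exact Hl. }
  assert (Hc : Un_cv (fun _ : nat => exp (- lam)) (exp (- lam))).
  { intros e he; exists 0%nat; intros; unfold Rdist; rewrite Rminus_diag, Rabs_R0; lra. }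
  pose proof (CV_mult _ _ _ _ Hc Hexp) as H.
  replace 1 with (exp (- lam) * exp lam)
    by (rewrite <- exp_plus; replace (- lam + lam) with 0 by ring; apply exp_0).
  intros e he; destruct (H e he) as [N HN]; exists N; intros n Hn.
  unfold poisson_cdf. rewrite (sum_eq _ (fun i => / INR (fact i) * lam ^ i * exp (- lam))).
  - rewrite <- scal_sum. apply HN; auto.
  - intros; unfold poisson_pmf; field. apply INR_fact_neq_0.
Qed.

Lemma poisson_cdf_le_1 lam k : 0 < lam -> poisson_cdf lam k <= 1.
Proof.
  intros H. apply (growing_ineq _ _); [|apply poisson_cdf_cv].
  intros n; unfold poisson_cdf; rewrite tech5.
  pose proof (poisson_pmf_pos lam (S n) H); lra.
Qed.

Lemma poisson_cdf_pos lam k : 0 < lam -> 0 < poisson_cdf lam k.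
Proof.
  intros H; induction k; unfold poisson_cdf in *; simpl; [apply poisson_pmf_pos; auto|].
  pose proof (poisson_pmf_pos lam (S k) H); lra.
Qed.

Lemma poisson_partial_increment lam G k d : 0 < lam ->
  0 <= poisson_partial lam G (k + d) - poisson_partial lam G k
    <= poisson_cdf lam (k + d) - poisson_cdf lam k.
Proof.
  intros H; induction d; [rewrite Nat.add_0_r; lra|].
  rewrite Nat.add_succ_r. unfold poisson_partial, poisson_cdf in *; rewrite !tech5.
  pose proof (poisson_term_bounds lam G (S (k + d)) H); lra.
Qed.

Lemma poisson_partial_le_cdf lam G k : 0 < lam ->
  0 <= poisson_partial lam G k <= poisson_cdf lam k.
Proof.
  intros H; induction k; unfold poisson_partial, poisson_cdf in *; simpl;
    [pose proof (poisson_term_bounds lam G 0 H); lra|].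
  pose proof (poisson_term_bounds lam G (S k) H); lra.
Qed.

Lemma poisson_sum_exists lam G : 0 < lam -> exists L, infinite_sum (poisson_term lam G) L.
Proof.
  intros H. destruct (growing_cv (poisson_partial lam G)) as [L HL].
  - intros n; unfold poisson_partial; rewrite tech5.
    pose proof (poisson_term_bounds lam G (S n) H); lra.
  - exists 1. intros x [n ->]. pose proof (poisson_partial_le_cdf lam G n H).
    pose proof (poisson_cdf_le_1 lam n H). lra.
  - exists L. exact HL.
Qed.

Lemma poisson_sum_bounds lam G L k : 0 < lam -> infinite_sum (poisson_term lam G) L ->
  poisson_partial lam G k <= L <= poisson_partial lam G k + (1 - poisson_cdf lam k).
Proof.
  intros H HL. split.
  - apply (cv_ge_eventually (poisson_partial lam G) L _ k HL). intros N HN.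
    replace N with (k + (N - k))%nat by lia.
    pose proof (poisson_partial_increment lam G k (N - k) H); lra.
  - apply (cv_le_eventually (poisson_partial lam G) L _ k HL). intros N HN.
    replace N with (k + (N - k))%nat by lia.
    pose proof (poisson_partial_increment lam G k (N - k) H).
    pose proof (poisson_cdf_le_1 lam (k + (N - k)) H); lra.
Qed.

(** Finite version of the tail estimate below: the mass of (k, k+d] weighted
    by k is controlled through the recursion of [poisson_pmf_succ]. *)
Lemma poisson_tail_finite lam k d : 0 < lam ->
  INR k * (poisson_cdf lam (k + d) - poisson_cdf lam k)
  <= lam * (poisson_cdf lam (k + d) - poisson_cdf lam k
            + poisson_pmf lam k - poisson_pmf lam (k + d)).
Proof.
  intros H; induction d; [rewrite Nat.add_0_r; lra|].
  rewrite Nat.add_succ_r. unfold poisson_cdf in *; rewrite tech5, poisson_pmf_succ.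
  set (x := poisson_pmf lam (k + d)) in *.
  assert (Hx : 0 < x) by apply poisson_pmf_pos, H.
  assert (HK : INR k <= INR (S (k + d))) by (apply le_INR; lia).
  assert (HK0 : 0 < INR (S (k + d))) by (apply lt_0_INR; lia).
  assert (INR k * (x * lam / INR (S (k + d))) <= lam * x).
  { replace (INR k * (x * lam / INR (S (k + d))))
      with ((lam * x) * (INR k / INR (S (k + d)))) by (field; lra).
    rewrite <- (Rmult_1_r (lam * x)) at 2. apply Rmult_le_compat_l; [nra|].
    apply (Rmult_le_reg_r (INR (S (k + d)))); auto.
    unfold Rdiv; rewrite Rmult_assoc, Rinv_l; lra. }
  nra.
Qed.

Lemma poisson_tail_bound lam k : 0 < lam ->
  INR k * (1 - poisson_cdf lam k) <= lam * (1 - poisson_cdf lam k + poisson_pmf lam k).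
Proof.
  intros H. pose proof (poisson_pmf_pos lam k H). pose proof (poisson_cdf_le_1 lam k H).
  destruct (Rle_or_lt (INR k) lam) as [h|h]; [nra|].
  assert (Hlim : 1 <= poisson_cdf lam k + lam * poisson_pmf lam k / (INR k - lam)).
  { apply (cv_le_eventually _ 1 _ k (poisson_cdf_cv lam)). intros N HN.
    replace N with (k + (N - k))%nat by lia.
    pose proof (poisson_tail_finite lam k (N - k) H).
    pose proof (poisson_pmf_pos lam (k + (N - k)) H).
    apply (Rmult_le_reg_l (INR k - lam)); [lra|].
    replace ((INR k - lam) * (poisson_cdf lam k + lam * poisson_pmf lam k / (INR k - lam)))
      with ((INR k - lam) * poisson_cdf lam k + lam * poisson_pmf lam k) by (field; lra).
    nra. }
  apply (Rmult_le_compat_l (INR k - lam)) in Hlim; [|lra].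
  replace ((INR k - lam) * (poisson_cdf lam k + lam * poisson_pmf lam k / (INR k - lam)))
    with ((INR k - lam) * poisson_cdf lam k + lam * poisson_pmf lam k) in Hlim by (field; lra).
  nra.
Qed.

Lemma poisson_cdf_rec_ineq lam k : 0 < lam ->
  lam * poisson_cdf lam k <= INR (S k) * poisson_cdf lam (S k).
Proof.
  intros H; induction k.
  - unfold poisson_cdf; simpl sum_f_R0. rewrite poisson_pmf_rec.
    pose proof (poisson_pmf_pos lam 0 H). simpl INR. lra.
  - unfold poisson_cdf in *.
    rewrite (tech5 _ (S k)). rewrite tech5 in IHk |- *.
    pose proof (poisson_pmf_rec lam (S k)) as E. rewrite (S_INR (S k)) in *.
    pose proof (poisson_cdf_pos lam k H). pose proof (poisson_pmf_pos lam (S k) H).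
    pose proof (poisson_pmf_pos lam (S (S k)) H). unfold poisson_cdf in *.
    assert (0 <= INR (S k)) by apply pos_INR.
    nra.
Qed.

(** * Stein's equation for the Poisson distribution *)

(** The solution g of lam g(k+1) - k g(k) = 1_Gamma(k) - P_lam(Gamma), g(0) = 0:
    g(k+1) = (P_lam(Gamma ∩ [0,k]) - P_lam(Gamma) P_lam([0,k])) / (lam pi_lam(k)). *)
Definition stein_solution (lam : R) (G : nat -> bool) (L : R) (k : nat) : R :=
  match k with
  | O => 0
  | S k' => (poisson_partial lam G k' - L * poisson_cdf lam k') / (lam * poisson_pmf lam k')
  end.

Lemma stein_equation lam G L k : 0 < lam ->
  lam * stein_solution lam G L (S k) - INR k * stein_solution lam G L k
  = (if G k then 1 else 0) - L.
Proof.
  intros H. pose proof (poisson_pmf_pos lam k H).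
  destruct k as [|k].
  - unfold stein_solution, poisson_partial, poisson_cdf; cbn [sum_f_R0 INR].
    change (poisson_term lam G 0) with (if G 0%nat then poisson_pmf lam 0 else 0).
    destruct (G 0%nat); field; lra.
  - unfold stein_solution, poisson_partial, poisson_cdf. rewrite !tech5.
    pose proof (poisson_pmf_rec lam k). pose proof (poisson_pmf_pos lam (S k) H).
    assert (0 < INR (S k)) by (apply lt_0_INR; lia).
    unfold poisson_term. fold (poisson_pmf lam (S k)).
    replace (lam * poisson_pmf lam k) with (INR (S k) * poisson_pmf lam (S k)) by lra.
    destruct (G (S k)); field; lra.
Qed.

Lemma affine_box_bound al be ga s F T R e c :
  al <= 0 -> be <= 0 -> 0 <= s <= F -> 0 <= T <= R -> 0 <= e <= 1 ->
  ga = - (al * F + be * R) -> ga <= c ->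
  Rabs (al * s + be * T + e * ga) <= c.
Proof.
  intros Hal Hbe Hs HT He Hga Hc.
  assert (0 <= ga) by nra.
  apply Rabs_le; split; nra.
Qed.

(** The increment g(k+2) - g(k+1), written in terms of the Poisson quantities
    at k and k+1 (x = pi(k), y = pi(k+1), F = P(Z <= k), s = P(Gamma ∩ [0,k]),
    R = P(Z > k+1), T = L - P(Gamma ∩ [0,k+1]), e = 1_Gamma(k+1)), is an
    affine form as in [affine_box_bound]; the signs come from the tail and
    head estimates of the Poisson cdf. *)
Lemma stein_increment_arith lam K x y F s R T e :
  0 < lam -> 0 < K -> 0 < x -> 0 < y -> lam * x = K * y ->
  0 <= s <= F -> 0 <= T <= R -> 0 <= e <= 1 -> R = 1 - (F + y) ->
  K * R <= lam * (R + y) -> lam * F <= K * (F + y) ->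
  Rabs (((s + e * y) - (T + s + e * y) * (F + y)) / (lam * y)
        - (s - (T + s + e * y) * F) / (lam * x)) <= / lam.
Proof.
  intros Hlam HK Hx Hy Hxy Hs HT He HR Htail Hhead.
  set (al := (K * R - lam * (R + y)) / (K * lam * y)).
  set (be := (lam * F - K * (F + y)) / (K * lam * y)).
  set (ga := R / lam + F / K).
  assert (Hd : 0 < / (K * lam * y)) by (apply Rinv_0_lt_compat; repeat apply Rmult_lt_0_compat; auto).
  replace (((s + e * y) - (T + s + e * y) * (F + y)) / (lam * y)
           - (s - (T + s + e * y) * F) / (lam * x))
    with (al * s + be * T + e * ga).
  2:{ assert (Ex : x = K * y / lam).
      { apply (Rmult_eq_reg_l lam); [rewrite Hxy; field|]; lra. }
      unfold al, be, ga. rewrite Ex, HR.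
      field; repeat split; lra. }
  apply affine_box_bound with F R; auto.
  - unfold al, Rdiv. nra.
  - unfold be, Rdiv. nra.
  - unfold al, be, ga. rewrite HR. field; repeat split; lra.
  - unfold ga. apply (Rmult_le_reg_l (K * lam)); [nra|].
    replace (K * lam * (R / lam + F / K)) with (K * R + lam * F) by (field; lra).
    replace (K * lam * / lam) with K by (field; lra). nra.
Qed.

Lemma stein_increment_bound lam G L k : 0 < lam -> infinite_sum (poisson_term lam G) L ->
  Rabs (stein_solution lam G L (S (S k)) - stein_solution lam G L (S k)) <= / lam.
Proof.
  intros H HL. unfold stein_solution.
  destruct (poisson_sum_bounds lam G L (S k) H HL) as [HL1 HL2].
  assert (Es : poisson_partial lam G (S k)
               = poisson_partial lam G k + (if G (S k) then 1 else 0) * poisson_pmf lam (S k)).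
  { unfold poisson_partial at 1. rewrite tech5. fold (poisson_partial lam G k).
    change (poisson_term lam G (S k)) with (if G (S k) then poisson_pmf lam (S k) else 0).
    destruct (G (S k)); ring. }
  assert (EF : poisson_cdf lam (S k) = poisson_cdf lam k + poisson_pmf lam (S k))
    by (unfold poisson_cdf; apply tech5).
  replace L with ((L - poisson_partial lam G (S k)) + poisson_partial lam G k
                  + (if G (S k) then 1 else 0) * poisson_pmf lam (S k)) by lra.
  rewrite Es, EF.
  apply stein_increment_arith with (K := INR (S k)) (R := 1 - poisson_cdf lam (S k)).
  - exact H.
  - apply lt_0_INR; lia.
  - apply poisson_pmf_pos, H.
  - apply poisson_pmf_pos, H.
  - apply poisson_pmf_rec.
  - apply poisson_partial_le_cdf, H.
  - lra.
  - destruct (G (S k)); lra.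
  - rewrite EF; ring.
  - apply poisson_tail_bound, H.
  - rewrite <- EF. apply poisson_cdf_rec_ineq, H.
Qed.

Lemma stein_solution_lipschitz lam G L a b : 0 < lam -> infinite_sum (poisson_term lam G) L ->
  (1 <= a)%nat -> (1 <= b)%nat ->
  Rabs (stein_solution lam G L a - stein_solution lam G L b) <= Rabs (INR a - INR b) / lam.
Proof.
  intros H HL.
  assert (Hd : forall a d, (1 <= a)%nat ->
            Rabs (stein_solution lam G L (a + d) - stein_solution lam G L a) <= INR d / lam).
  { intros a0 d Ha. induction d.
    - rewrite Nat.add_0_r, Rminus_diag, Rabs_R0. simpl; unfold Rdiv; lra.
    - rewrite Nat.add_succ_r. destruct a0 as [|a1]; [lia|].
      replace (S (S a1 + d)) with (S (S (a1 + d))) by lia.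
      replace (S a1 + d)%nat with (S (a1 + d)) in IHd by lia.
      pose proof (stein_increment_bound lam G L (a1 + d) H HL).
      replace (stein_solution lam G L (S (S (a1 + d))) - stein_solution lam G L (S a1))
        with ((stein_solution lam G L (S (S (a1 + d))) - stein_solution lam G L (S (a1 + d)))
              + (stein_solution lam G L (S (a1 + d)) - stein_solution lam G L (S a1))) by ring.
      eapply Rle_trans; [apply Rabs_triang|].
      replace (INR (S d) / lam) with (/ lam + INR d / lam) by (rewrite S_INR; field; lra).
      lra. }
  intros Ha Hb. destruct (Nat.le_ge_cases a b) as [h|h].
  - replace b with (a + (b - a))%nat by lia. rewrite Rabs_minus_sym.
    replace (INR a - INR (a + (b - a))) with (- INR (b - a)) by (rewrite plus_INR; ring).
    rewrite Rabs_Ropp, (Rabs_pos_eq (INR (b - a))) by apply pos_INR. apply Hd; auto.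
  - replace a with (b + (a - b))%nat by lia.
    replace (INR (b + (a - b)) - INR b) with (INR (a - b)) by (rewrite plus_INR; ring).
    rewrite (Rabs_pos_eq (INR (a - b))) by apply pos_INR. apply Hd; auto.
Qed.

(** * Finite sums *)

(** [sum_lt f k] is f 0 + ... + f (k-1); [sum_1n f n] is f 1 + ... + f n. *)
Fixpoint sum_lt (f : nat -> R) (k : nat) : R :=
  match k with O => 0 | S k' => f k' + sum_lt f k' end.

Definition sum_1n (f : nat -> R) (n : nat) : R := sum_lt (fun j => f (S j)) n.

Lemma sum_lt_ext f g k : (forall j, (j < k)%nat -> f j = g j) -> sum_lt f k = sum_lt g k.
Proof. induction k; intros H; simpl; auto. rewrite (H k), IHk; auto. Qed.

Lemma sum_lt_add f g k : sum_lt (fun j => f j + g j) k = sum_lt f k + sum_lt g k.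
Proof. induction k; simpl; [ring|]. rewrite IHk; ring. Qed.

Lemma sum_lt_sub f g k : sum_lt (fun j => f j - g j) k = sum_lt f k - sum_lt g k.
Proof. induction k; simpl; [ring|]. rewrite IHk; ring. Qed.

Lemma sum_lt_scal c f k : sum_lt (fun j => c * f j) k = c * sum_lt f k.
Proof. induction k; simpl; [ring|]. rewrite IHk; ring. Qed.

Lemma sum_lt_const c k : sum_lt (fun _ => c) k = INR k * c.
Proof. induction k; simpl sum_lt; [simpl; ring|]. rewrite IHk, S_INR; ring. Qed.

Lemma sum_lt_mono f g k : (forall j, (j < k)%nat -> f j <= g j) -> sum_lt f k <= sum_lt g k.
Proof.
  induction k; intros H; simpl; [lra|].
  pose proof (H k ltac:(lia)). pose proof (IHk ltac:(intros; apply H; lia)). lra.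
Qed.

Lemma sum_lt_nonneg f k : (forall j, (j < k)%nat -> 0 <= f j) -> 0 <= sum_lt f k.
Proof. intros H. rewrite <- (Rmult_0_r (INR k)), <- sum_lt_const. apply sum_lt_mono; auto. Qed.

Lemma sum_lt_ge_term f k j : (j < k)%nat -> (forall i, (i < k)%nat -> 0 <= f i) ->
  f j <= sum_lt f k.
Proof.
  induction k; intros Hj H; [lia|]. simpl.
  destruct (Nat.eq_dec j k) as [->|Hne].
  - pose proof (sum_lt_nonneg f k ltac:(intros; apply H; lia)); lra.
  - pose proof (IHk ltac:(lia) ltac:(intros; apply H; lia)). pose proof (H k ltac:(lia)). lra.
Qed.

Lemma sum_lt_abs f k : Rabs (sum_lt f k) <= sum_lt (fun j => Rabs (f j)) k.
Proof.
  induction k; simpl; [rewrite Rabs_R0; lra|].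
  eapply Rle_trans; [apply Rabs_triang|]. lra.
Qed.

Lemma sum_1n_succ f n : sum_1n f (S n) = f (S n) + sum_1n f n.
Proof. reflexivity. Qed.

Lemma sum_1n_ext f g n : (forall l, (1 <= l <= n)%nat -> f l = g l) -> sum_1n f n = sum_1n g n.
Proof. intros H; apply sum_lt_ext; intros; apply H; lia. Qed.

Lemma sum_1n_add f g n : sum_1n (fun l => f l + g l) n = sum_1n f n + sum_1n g n.
Proof. unfold sum_1n; apply sum_lt_add. Qed.

Lemma sum_1n_sub f g n : sum_1n (fun l => f l - g l) n = sum_1n f n - sum_1n g n.
Proof. unfold sum_1n; apply sum_lt_sub. Qed.

Lemma sum_1n_scal c f n : sum_1n (fun l => c * f l) n = c * sum_1n f n.
Proof. unfold sum_1n; apply sum_lt_scal. Qed.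

Lemma sum_1n_const c n : sum_1n (fun _ => c) n = INR n * c.
Proof. unfold sum_1n; apply sum_lt_const. Qed.

Lemma sum_1n_mono f g n : (forall l, (1 <= l <= n)%nat -> f l <= g l) -> sum_1n f n <= sum_1n g n.
Proof. intros H; apply sum_lt_mono; intros; apply H; lia. Qed.

Lemma sum_1n_nonneg f n : (forall l, (1 <= l <= n)%nat -> 0 <= f l) -> 0 <= sum_1n f n.
Proof. intros H; apply sum_lt_nonneg; intros; apply H; lia. Qed.

Lemma sum_1n_ge_term f n l : (1 <= l <= n)%nat -> (forall i, (1 <= i <= n)%nat -> 0 <= f i) ->
  f l <= sum_1n f n.
Proof.
  intros Hl H. replace l with (S (l - 1)) by lia.
  apply (sum_lt_ge_term (fun j => f (S j))); [lia|]. intros; apply H; lia.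
Qed.

Lemma sum_1n_abs f n : Rabs (sum_1n f n) <= sum_1n (fun l => Rabs (f l)) n.
Proof. unfold sum_1n; apply sum_lt_abs. Qed.

Lemma sum_1n_lt_swap (f : nat -> nat -> R) n k :
  sum_1n (fun l => sum_lt (fun j => f j l) k) n = sum_lt (fun j => sum_1n (fun l => f j l) n) k.
Proof.
  induction k; simpl; [rewrite sum_1n_const; ring|]. rewrite sum_1n_add, IHk; reflexivity.
Qed.

Lemma sum_1n_delta c n l : (1 <= l <= n)%nat ->
  sum_1n (fun i => if Nat.eqb i l then c else 0) n = c.
Proof.
  induction n; intros Hl; [lia|]. rewrite sum_1n_succ.
  destruct (Nat.eqb_spec (S n) l).
  - subst. rewrite (sum_1n_ext _ (fun _ => 0)), sum_1n_const; [ring|].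
    intros i Hi. destruct (Nat.eqb_spec i (S n)); [lia|auto].
  - rewrite IHn by lia; ring.
Qed.

(** * Expectation under independent Bernoulli coordinates *)

Lemma upd_same w k a b : upd (upd w k a) k b = upd w k b.
Proof. apply functional_extensionality; intro i; unfold upd; destruct (Nat.eqb i k); auto. Qed.

Lemma upd_comm w k k' a b : k <> k' -> upd (upd w k a) k' b = upd (upd w k' b) k a.
Proof.
  intro H; apply functional_extensionality; intro i; unfold upd.
  destruct (Nat.eqb_spec i k'), (Nat.eqb_spec i k); subst; auto; congruence.
Qed.

Lemma upd_eq w k b : upd w k b k = b.
Proof. unfold upd; rewrite Nat.eqb_refl; auto. Qed.

Lemma upd_neq w k b i : i <> k -> upd w k b i = w i.
Proof. intro H; unfold upd; destruct (Nat.eqb_spec i k); auto; congruence. Qed.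

Section Bernoulli.
Variable p : R.

Lemma bern_ext m F G : (forall w, F w = G w) -> bern_expect p m F = bern_expect p m G.
Proof. intros H; f_equal; apply functional_extensionality; auto. Qed.

Lemma bern_const m c : bern_expect p m (fun _ => c) = c.
Proof. induction m; simpl; auto. rewrite IHm; ring. Qed.

Lemma bern_add m F G :
  bern_expect p m (fun w => F w + G w) = bern_expect p m F + bern_expect p m G.
Proof.
  revert F G; induction m; intros; simpl; auto.
  rewrite (IHm (fun w => F (upd w (S m) true)) (fun w => G (upd w (S m) true))).
  rewrite (IHm (fun w => F (upd w (S m) false)) (fun w => G (upd w (S m) false))). ring.
Qed.

Lemma bern_scal m c F : bern_expect p m (fun w => c * F w) = c * bern_expect p m F.
Proof.
  revert F; induction m; intros; simpl; auto.
  rewrite (IHm (fun w => F (upd w (S m) true))), (IHm (fun w => F (upd w (S m) false))). ring.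
Qed.

Lemma bern_sub m F G :
  bern_expect p m (fun w => F w - G w) = bern_expect p m F - bern_expect p m G.
Proof.
  rewrite (bern_ext m _ (fun w => F w + (-1) * G w)) by (intros; ring).
  rewrite bern_add, bern_scal; ring.
Qed.

Lemma bern_sum m n (F : nat -> (nat -> bool) -> R) :
  bern_expect p m (fun w => sum_1n (fun l => F l w) n) = sum_1n (fun l => bern_expect p m (F l)) n.
Proof. induction n; [exact (bern_const m 0)|]. rewrite sum_1n_succ, <- IHn, <- bern_add; reflexivity. Qed.

Lemma bern_coord m k F : (1 <= k <= m)%nat ->
  bern_expect p m (fun w => if w k then F w else 0) = p * bern_expect p m (fun w => F (upd w k true)).
Proof.
  revert F; induction m; intros F Hk; [lia|]. simpl.
  destruct (Nat.eq_dec k (S m)) as [->|Hne].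
  - rewrite (bern_ext m _ (fun w => F (upd w (S m) true))) by (intros; rewrite upd_eq; auto).
    rewrite (bern_ext m (fun w => if upd w (S m) false (S m) then _ else 0) (fun _ => 0))
      by (intros; rewrite upd_eq; auto).
    rewrite (bern_ext m (fun w => F (upd (upd w (S m) true) (S m) true)) (fun w => F (upd w (S m) true)))
      by (intros; rewrite upd_same; auto).
    rewrite (bern_ext m (fun w => F (upd (upd w (S m) false) (S m) true)) (fun w => F (upd w (S m) true)))
      by (intros; rewrite upd_same; auto).
    rewrite bern_const. ring.
  - assert (Hk' : (1 <= k <= m)%nat) by lia.
    rewrite (bern_ext m (fun w => if upd w (S m) true k then _ else 0)
                        (fun w => if w k then F (upd w (S m) true) else 0))
      by (intros; rewrite upd_neq; auto).
    rewrite (bern_ext m (fun w => if upd w (S m) false k then _ else 0)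
                        (fun w => if w k then F (upd w (S m) false) else 0))
      by (intros; rewrite upd_neq; auto).
    rewrite (IHm (fun w => F (upd w (S m) true)) Hk'), (IHm (fun w => F (upd w (S m) false)) Hk').
    rewrite (bern_ext m (fun w => F (upd (upd w (S m) true) k true))
                        (fun w => F (upd (upd w k true) (S m) true)))
      by (intros; rewrite upd_comm; auto).
    rewrite (bern_ext m (fun w => F (upd (upd w (S m) false) k true))
                        (fun w => F (upd (upd w k true) (S m) false)))
      by (intros; rewrite upd_comm; auto).
    ring.
Qed.

Hypothesis Hp : 0 <= p <= 1.

Lemma bern_mono m F G : (forall w, F w <= G w) -> bern_expect p m F <= bern_expect p m G.
Proof.
  revert F G; induction m; intros F G H; simpl; auto.
  pose proof (IHm (fun w => F (upd w (S m) true)) (fun w => G (upd w (S m) true))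
                ltac:(intros; apply H)).
  pose proof (IHm (fun w => F (upd w (S m) false)) (fun w => G (upd w (S m) false))
                ltac:(intros; apply H)).
  nra.
Qed.

Lemma bern_abs m F : Rabs (bern_expect p m F) <= bern_expect p m (fun w => Rabs (F w)).
Proof.
  apply Rabs_le. split.
  - replace (- bern_expect p m (fun w => Rabs (F w)))
      with ((-1) * bern_expect p m (fun w => Rabs (F w))) by ring.
    rewrite <- bern_scal. apply bern_mono.
    intros w. pose proof (Rle_abs (- F w)). rewrite Rabs_Ropp in H. lra.
  - apply bern_mono. intros; apply Rle_abs.
Qed.

End Bernoulli.

(** * Blocks of coordinates *)

(** [force_block q l k w] sets the coordinates q_0(l), ..., q_(k-1)(l) of w
    to 1: this is the size-biased coupling for the l-th summand of S_n. *)
Fixpoint force_block (q : nat -> nat -> nat) (l k : nat) (w : nat -> bool) : nat -> bool :=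
  match k with O => w | S k' => upd (force_block q l k' w) (q k' l) true end.

Lemma force_block_outside q l k w i : (forall j, (j < k)%nat -> q j l <> i) ->
  force_block q l k w i = w i.
Proof.
  induction k; intros H; simpl; auto.
  rewrite upd_neq; [apply IHk; intros; apply H; lia|]. intro e; apply (H k); auto.
Qed.

Lemma force_block_inside q l k w j : (j < k)%nat -> force_block q l k w (q j l) = true.
Proof.
  induction k; intros H; [lia|]. simpl. destruct (Nat.eq_dec (q j l) (q k l)) as [e|e].
  - rewrite e, upd_eq; auto.
  - rewrite upd_neq by auto. apply IHk. destruct (Nat.eq_dec j k); subst; [congruence|lia].
Qed.

Lemma force_block_incr q l k w i : w i = true -> force_block q l k w i = true.
Proof. induction k; intros H; simpl; auto. unfold upd. destruct (Nat.eqb i (q k l)); auto. Qed.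

Lemma prod_xi_ext w w' q l k : (forall j, (j < k)%nat -> w' (q j l) = w (q j l)) ->
  prod_xi w' q l k = prod_xi w q l k.
Proof. induction k; intros H; simpl; auto. rewrite H, IHk; auto. Qed.

Lemma prod_xi_01 w q l k : prod_xi w q l k = 0%nat \/ prod_xi w q l k = 1%nat.
Proof. induction k; simpl; auto. unfold b2n; destruct (w (q k l)); lia. Qed.

Lemma prod_xi_le_factor w q l k j : (j < k)%nat -> (prod_xi w q l k <= b2n (w (q j l)))%nat.
Proof.
  induction k; intros H; [lia|]. simpl.
  destruct (Nat.eq_dec j k) as [->|ne].
  - destruct (prod_xi_01 w q l k) as [e|e]; rewrite e; lia.
  - pose proof (IHk ltac:(lia)). unfold b2n at 1; destruct (w (q k l)); lia.
Qed.

Lemma prod_xi_mono w w' q l k : (forall i, w i = true -> w' i = true) ->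
  (prod_xi w q l k <= prod_xi w' q l k)%nat.
Proof.
  intros H; induction k; simpl; auto.
  unfold b2n. destruct (w (q k l)) eqn:E1; [rewrite (H _ E1)|]; lia.
Qed.

Lemma prod_xi_force_block w q l k : prod_xi (force_block q l k w) q l k = 1%nat.
Proof.
  assert (forall k', (k' <= k)%nat -> prod_xi (force_block q l k w) q l k' = 1%nat).
  { induction k'; intros H; simpl; auto.
    rewrite force_block_inside, IHk' by lia. reflexivity. }
  apply H; lia.
Qed.

Lemma S_sum_as_sum w q ell n :
  INR (S_sum w q ell n) = sum_1n (fun l => INR (prod_xi w q l ell)) n.
Proof. induction n; simpl S_sum; auto. rewrite plus_INR, IHn; reflexivity. Qed.

Lemma S_sum_ge_term w q ell n l : (1 <= l <= n)%nat -> (prod_xi w q l ell <= S_sum w q ell n)%nat.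
Proof.
  induction n; intros H; [lia|]. simpl. destruct (Nat.eq_dec l (S n)) as [->|ne]; [lia|].
  pose proof (IHn ltac:(lia)); lia.
Qed.

Section Blocks.
Variables (ell : nat) (q : nat -> nat -> nat).
Hypothesis Hq_incr : forall j l, (j < ell)%nat -> (1 <= l)%nat -> (q j l < q j (S l))%nat.
Hypothesis Hq_first : forall l, (1 <= l)%nat -> (l <= q 0%nat l)%nat.
Hypothesis Hq_order : forall j l, (S j < ell)%nat -> (1 <= l)%nat -> (q j l < q (S j) l)%nat.

Lemma q_strict_in_j j j' l : (1 <= l)%nat -> (j < j')%nat -> (j' < ell)%nat -> (q j l < q j' l)%nat.
Proof.
  intros Hl Hj Hj'. induction j'; [lia|].
  destruct (Nat.eq_dec j j') as [->|ne]; [apply Hq_order; lia|].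
  pose proof (IHj' ltac:(lia) ltac:(lia)). pose proof (Hq_order j' l ltac:(lia) Hl). lia.
Qed.

Lemma q_strict_in_l j l l' : (j < ell)%nat -> (1 <= l)%nat -> (l < l')%nat -> (q j l < q j l')%nat.
Proof.
  intros Hj Hl Hll. induction l'; [lia|].
  destruct (Nat.eq_dec l l') as [->|ne]; [apply Hq_incr; lia|].
  pose proof (IHl' ltac:(lia)). pose proof (Hq_incr j l' Hj ltac:(lia)). lia.
Qed.

Lemma q_range j l n : (1 <= ell)%nat -> (j < ell)%nat -> (1 <= l <= n)%nat -> (1 <= q j l <= q (ell - 1) n)%nat.
Proof.
  intros Hell Hj Hl. split.
  - pose proof (Hq_first l ltac:(lia)).
    destruct j; [lia|]. pose proof (q_strict_in_j 0 (S j) l ltac:(lia) ltac:(lia) Hj). lia.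
  - assert (q j l <= q j n)%nat.
    { destruct (Nat.eq_dec l n) as [->|ne]; [lia|].
      pose proof (q_strict_in_l j l n Hj ltac:(lia) ltac:(lia)); lia. }
    destruct (Nat.eq_dec j (ell - 1)) as [e|ne]; [rewrite <- e; auto|].
    pose proof (q_strict_in_j j (ell - 1) n ltac:(lia) ltac:(lia) ltac:(lia)). lia.
Qed.

(** Two different blocks differ: block l' has a coordinate outside block l
    (its first coordinate if l' < l, its last one if l' > l). *)
Lemma block_private_coord l l' : (1 <= ell)%nat -> (1 <= l)%nat -> (1 <= l')%nat -> l <> l' ->
  exists c, (c < ell)%nat /\ forall j, (j < ell)%nat -> q j l <> q c l'.
Proof.
  intros Hell Hl Hl' Hne. destruct (Nat.lt_total l' l) as [h|[h|h]]; [|lia|].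
  - exists 0%nat. split; [lia|]. intros j Hj.
    pose proof (q_strict_in_l 0 l' l ltac:(lia) ltac:(lia) h).
    destruct j; [lia|]. pose proof (q_strict_in_j 0 (S j) l ltac:(lia) ltac:(lia) Hj). lia.
  - exists (ell - 1)%nat. split; [lia|]. intros j Hj.
    pose proof (q_strict_in_l (ell - 1) l l' ltac:(lia) ltac:(lia) ltac:(lia)).
    destruct (Nat.eq_dec j (ell - 1)) as [->|nn]; [lia|].
    pose proof (q_strict_in_j j (ell - 1) l ltac:(lia) ltac:(lia) ltac:(lia)). lia.
Qed.

Definition overlap (l l' : nat) : R :=
  sum_lt (fun j => sum_lt (fun j' => if Nat.eqb (q j' l') (q j l) then 1 else 0) ell) ell.

Lemma overlap_nonneg l l' : 0 <= overlap l l'.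
Proof.
  unfold overlap. apply sum_lt_nonneg; intros; apply sum_lt_nonneg; intros.
  destruct (Nat.eqb _ _); lra.
Qed.

Lemma overlap_ge_1 l l' j j' : (j < ell)%nat -> (j' < ell)%nat -> q j' l' = q j l ->
  1 <= overlap l l'.
Proof.
  intros Hj Hj' Heq. unfold overlap.
  eapply Rle_trans; [|apply (sum_lt_ge_term _ ell j Hj)].
  2:{ intros; apply sum_lt_nonneg; intros; destruct (Nat.eqb _ _); lra. }
  eapply Rle_trans; [|apply (sum_lt_ge_term _ ell j' Hj')].
  2:{ intros; destruct (Nat.eqb _ _); lra. }
  cbv beta. rewrite Heq, Nat.eqb_refl; lra.
Qed.

Lemma coord_count_le_1 n j c : (j < ell)%nat ->
  sum_1n (fun l' => if Nat.eqb (q j l') c then 1 else 0) n <= 1.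
Proof.
  intros Hj.
  assert (Hzero : forall k, (forall l', (1 <= l' <= k)%nat -> q j l' <> c) ->
            sum_1n (fun l' => if Nat.eqb (q j l') c then 1 else 0) k = 0).
  { intros k Hk. rewrite (sum_1n_ext _ (fun _ => 0)), sum_1n_const; [ring|].
    intros l' Hl'. destruct (Nat.eqb_spec (q j l') c); auto. exfalso; apply (Hk l'); auto. }
  induction n as [|k IH]; [unfold sum_1n; simpl; lra|]. rewrite sum_1n_succ.
  destruct (Nat.eqb_spec (q j (S k)) c).
  - rewrite Hzero; [lra|]. intros l' Hl' e'.
    pose proof (q_strict_in_l j l' (S k) Hj ltac:(lia) ltac:(lia)). lia.
  - lra.
Qed.

Lemma total_overlap_bound n l : sum_1n (fun l' => overlap l l') n <= INR ell * INR ell.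
Proof.
  unfold overlap. rewrite sum_1n_lt_swap, <- sum_lt_const. apply sum_lt_mono. intros j Hj.
  rewrite sum_1n_lt_swap, <- (Rmult_1_r (INR ell)), <- sum_lt_const. apply sum_lt_mono.
  intros j' Hj'. apply coord_count_le_1; auto.
Qed.

End Blocks.

(** * The Stein–Chen bound for S_n *)

Section Coupling.
Variables (ell : nat) (q : nat -> nat -> nat).
Hypothesis Hell : (1 <= ell)%nat.
Hypothesis Hq_incr : forall j l, (j < ell)%nat -> (1 <= l)%nat -> (q j l < q j (S l))%nat.
Hypothesis Hq_first : forall l, (1 <= l)%nat -> (l <= q 0%nat l)%nat.
Hypothesis Hq_order : forall j l, (S j < ell)%nat -> (1 <= l)%nat -> (q j l < q (S j) l)%nat.
Variable p : R.
Hypothesis Hp : 0 < p < 1.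
Variable n : nat.
Hypothesis Hn : (1 <= n)%nat.

Let m := q (ell - 1) n.
Let E := bern_expect p m.
Let X (w : nat -> bool) (l : nat) := INR (prod_xi w q l ell).

Lemma coord_in_range j l : (j < ell)%nat -> (1 <= l <= n)%nat -> (1 <= q j l <= m)%nat.
Proof. apply q_range; auto. Qed.

Lemma size_bias l h : (1 <= l <= n)%nat ->
  E (fun w => X w l * h w) = p ^ ell * E (fun w => h (force_block q l ell w)).
Proof.
  intros Hl. unfold X, E.
  assert (Hk : forall k, (k <= ell)%nat -> forall h,
    bern_expect p m (fun w => INR (prod_xi w q l k) * h w)
    = p ^ k * bern_expect p m (fun w => h (force_block q l k w))).
  { induction k; intros Hk h0.
    - simpl. rewrite (bern_ext p m _ h0) by (intros; simpl; apply Rmult_1_l).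
      rewrite Rmult_1_l; reflexivity.
    - rewrite (bern_ext p m _ (fun w => if w (q k l) then INR (prod_xi w q l k) * h0 w else 0)).
      2:{ intros w; simpl. unfold b2n; destruct (w (q k l)); rewrite ?mult_INR; simpl; ring. }
      rewrite bern_coord by (apply coord_in_range; lia).
      rewrite (bern_ext p m _ (fun w => INR (prod_xi w q l k) * h0 (upd w (q k l) true))).
      2:{ intros w. rewrite (prod_xi_ext w); auto. intros j Hj. apply upd_neq.
          pose proof (q_strict_in_j ell q Hq_order j k l ltac:(lia) Hj ltac:(lia)). lia. }
      rewrite IHk by lia. simpl. ring. }
  apply Hk; lia.
Qed.

Lemma expect_summand l : (1 <= l <= n)%nat -> E (fun w => X w l) = p ^ ell.
Proof.
  intros Hl. rewrite (bern_ext p m _ (fun w => X w l * 1)) by (intros; ring).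
  fold E. rewrite size_bias by auto. unfold E; rewrite bern_const; ring.
Qed.

Lemma forced_summand_increment l l' : (1 <= l <= n)%nat -> (1 <= l' <= n)%nat -> l <> l' ->
  E (fun w => X (force_block q l ell w) l' - X w l') <= p * overlap ell q l l'.
Proof.
  intros Hl Hl' Hne. unfold E; rewrite bern_sub; fold E.
  destruct (classic (exists j j', (j < ell)%nat /\ (j' < ell)%nat /\ q j' l' = q j l))
    as [(j & j' & Hj & Hj' & Heq)|Hdisj].
  - (* the blocks meet: X_l' is still bounded by an untouched coordinate *)
    pose proof (overlap_ge_1 ell q l l' j j' Hj Hj' Heq).
    destruct (block_private_coord ell q Hq_incr Hq_order l l' Hell ltac:(lia) ltac:(lia) Hne)
      as (c & Hc & Hcn).
    assert (H1 : E (fun w => X (force_block q l ell w) l') <= p).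
    { apply Rle_trans with (E (fun w => INR (b2n (w (q c l'))))).
      - unfold E; apply bern_mono; [lra|]. intros w. unfold X. apply le_INR.
        rewrite <- (force_block_outside q l ell w (q c l')) by (intros j0 Hj0; apply Hcn; auto).
        apply prod_xi_le_factor; auto.
      - right. unfold E. rewrite (bern_ext p m _ (fun w => if w (q c l') then 1 else 0))
          by (intros w; unfold b2n; destruct (w (q c l')); reflexivity).
        rewrite bern_coord by (apply coord_in_range; auto). rewrite bern_const; ring. }
    assert (H2 : 0 <= E (fun w => X w l')).
    { unfold E. rewrite <- (bern_const p m 0). apply bern_mono; [lra|]. intros; apply pos_INR. }
    nra.
  - (* disjoint blocks: forcing block l does not change X_l' *)
    unfold E. rewrite (bern_ext p m _ (fun w => X w l')), Rminus_diag.
    + pose proof (overlap_nonneg ell q l l'). nra.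
    + intros w. unfold X. rewrite (prod_xi_ext w (force_block q l ell w)); auto.
      intros j' Hj'. apply force_block_outside. intros j Hj e. apply Hdisj. exists j, j'. auto.
Qed.

Lemma coupling_distance_pointwise l w : (1 <= l <= n)%nat ->
  Rabs (1 + INR (S_sum w q ell n) - INR (S_sum (force_block q l ell w) q ell n))
  <= sum_1n (fun l' => X (force_block q l ell w) l' - X w l') n - 1 + 2 * X w l.
Proof.
  intros Hl. rewrite !S_sum_as_sum.
  set (D := sum_1n (fun l' => X (force_block q l ell w) l' - X w l') n).
  assert (HD : sum_1n (fun l' => INR (prod_xi (force_block q l ell w) q l' ell)) n
               = D + sum_1n (fun l' => INR (prod_xi w q l' ell)) n)
    by (unfold D; rewrite sum_1n_sub; unfold X; ring).
  rewrite HD.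
  assert (Hnn : forall l', (1 <= l' <= n)%nat -> 0 <= X (force_block q l ell w) l' - X w l').
  { intros l' _. unfold X. apply Rge_le, Rge_minus, Rle_ge, le_INR, prod_xi_mono.
    intros; apply force_block_incr; auto. }
  assert (Ht : X (force_block q l ell w) l - X w l <= D)
    by (apply (sum_1n_ge_term (fun l' => X (force_block q l ell w) l' - X w l')); auto).
  assert (H0 : 0 <= D) by (apply sum_1n_nonneg; auto).
  unfold X at 1 in Ht. rewrite prod_xi_force_block in Ht. simpl INR in Ht.
  unfold X in *. destruct (prod_xi_01 w q l ell) as [e|e]; rewrite e in *; simpl INR in *.
  - rewrite Rabs_minus_sym, Rabs_pos_eq; lra.
  - apply Rabs_le; lra.
Qed.

Lemma coupling_distance_bound l : (1 <= l <= n)%nat ->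
  E (fun w => Rabs (1 + INR (S_sum w q ell n) - INR (S_sum (force_block q l ell w) q ell n)))
  <= p ^ ell + INR ell * INR ell * p.
Proof.
  intros Hl.
  eapply Rle_trans; [apply bern_mono; [lra|]; intros w; apply coupling_distance_pointwise, Hl|].
  rewrite bern_add, bern_sub, bern_scal, bern_const, bern_sum. fold E.
  rewrite expect_summand by auto.
  assert (Hs : sum_1n (fun l' => E (fun w => X (force_block q l ell w) l' - X w l')) n
               <= sum_1n (fun l' => (if Nat.eqb l' l then 1 - p ^ ell else 0)
                                    + p * overlap ell q l l') n).
  { apply sum_1n_mono. intros l' Hl'. destruct (Nat.eqb_spec l' l) as [->|ne].
    - unfold E; rewrite bern_sub; fold E. rewrite expect_summand by auto.
      rewrite (bern_ext p m _ (fun _ => 1))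
        by (intros w; unfold X; rewrite prod_xi_force_block; reflexivity).
      unfold E; rewrite bern_const. pose proof (overlap_nonneg ell q l l). nra.
    - pose proof (forced_summand_increment l l' Hl Hl' ltac:(auto)). lra. }
  rewrite sum_1n_add, sum_1n_delta, sum_1n_scal in Hs by auto.
  pose proof (total_overlap_bound ell q Hq_incr n l).
  assert (p * sum_1n (fun l' => overlap ell q l l') n <= p * (INR ell * INR ell))
    by (apply Rmult_le_compat_l; lra).
  change (sum_1n (fun l' => overlap ell q l l') n) with (sum_1n (overlap ell q l) n) in *. lra.
Qed.

Lemma stein_identity G L : infinite_sum (poisson_term (INR n * p ^ ell) G) L ->
  let g := stein_solution (INR n * p ^ ell) G L in
  let W := fun w => S_sum w q ell n in
  prob_Sn_in p q ell n G - L
  = sum_1n (fun l => p ^ ell * E (fun w => g (S (W w)) - g (W (force_block q l ell w)))) n.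
Proof.
  intros HL g W.
  assert (Hmu : 0 < INR n * p ^ ell)
    by (apply Rmult_lt_0_compat; [apply lt_0_INR; lia | apply pow_lt; lra]).
  transitivity (E (fun w => INR n * p ^ ell * g (S (W w)) - INR (W w) * g (W w))).
  { unfold prob_Sn_in, E. fold m.
    rewrite (bern_ext p m (fun w => INR n * p ^ ell * g (S (W w)) - INR (W w) * g (W w))
                          (fun w => (if G (W w) then 1 else 0) - L))
      by (intros w; unfold g; rewrite stein_equation; auto).
    rewrite bern_sub, bern_const; reflexivity. }
  unfold E at 1. rewrite bern_sub, bern_scal.
  rewrite (bern_ext p m (fun w => INR (W w) * g (W w)) (fun w => sum_1n (fun l => X w l * g (W w)) n)).
  2:{ intros w. unfold W at 1. rewrite S_sum_as_sum, Rmult_comm, <- sum_1n_scal.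
      apply sum_1n_ext; intros; unfold X; ring. }
  rewrite bern_sum. fold E.
  rewrite (sum_1n_ext _ (fun l => p ^ ell * E (fun w => g (W (force_block q l ell w)))))
    by (intros; apply size_bias; auto).
  rewrite (sum_1n_ext (fun l => p ^ ell * E (fun w => g (S (W w)) - g (W (force_block q l ell w))))
                     (fun l => p ^ ell * E (fun w => g (S (W w)))
                               - p ^ ell * E (fun w => g (W (force_block q l ell w)))))
    by (intros; unfold E; rewrite bern_sub; ring).
  rewrite sum_1n_sub, sum_1n_const. ring.
Qed.

(** Each term of Stein's identity is small, by the Lipschitz bound on g and
    the closeness of the coupling. *)
Lemma stein_term_bound G L l : infinite_sum (poisson_term (INR n * p ^ ell) G) L ->
  (1 <= l <= n)%nat ->
  let g := stein_solution (INR n * p ^ ell) G L in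
  let W := fun w => S_sum w q ell n in
  Rabs (E (fun w => g (S (W w)) - g (W (force_block q l ell w))))
  <= (p ^ ell + INR ell * INR ell * p) / (INR n * p ^ ell).
Proof.
  intros HL Hl g W.
  assert (Hmu : 0 < INR n * p ^ ell)
    by (apply Rmult_lt_0_compat; [apply lt_0_INR; lia | apply pow_lt; lra]).
  eapply Rle_trans; [apply bern_abs; lra|].
  eapply Rle_trans.
  { apply (bern_mono p) with (G := fun w => / (INR n * p ^ ell)
        * Rabs (1 + INR (S_sum w q ell n) - INR (S_sum (force_block q l ell w) q ell n))); [lra|].
    intros w. unfold g. eapply Rle_trans; [apply stein_solution_lipschitz; auto; try lia|].
    - unfold W. pose proof (S_sum_ge_term (force_block q l ell w) q ell n l Hl).
      rewrite prod_xi_force_block in H. lia.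
    - unfold W. rewrite S_INR. right. unfold Rdiv. rewrite Rmult_comm. f_equal. f_equal. ring. }
  rewrite bern_scal. fold E. unfold Rdiv. rewrite (Rmult_comm (p ^ ell + INR ell * INR ell * p)).
  apply Rmult_le_compat_l; [left; apply Rinv_0_lt_compat; auto|].
  apply coupling_distance_bound; auto.
Qed.

Lemma stein_chen_bound G L : infinite_sum (poisson_term (INR n * p ^ ell) G) L ->
  Rabs (prob_Sn_in p q ell n G - L) <= p ^ ell + INR ell * INR ell * p.
Proof.
  intros HL. rewrite (stein_identity G L HL).
  eapply Rle_trans; [apply sum_1n_abs|].
  eapply Rle_trans.
  { apply (sum_1n_mono _ (fun _ => p ^ ell * ((p ^ ell + INR ell * INR ell * p) / (INR n * p ^ ell)))).
    intros l Hl. rewrite Rabs_mult, (Rabs_pos_eq (p ^ ell)) by (apply pow_le; lra).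
    apply Rmult_le_compat_l; [apply pow_le; lra|]. apply stein_term_bound; auto. }
  rewrite sum_1n_const. right. field. split; [apply pow_nonzero; lra | apply not_0_INR; lia].
Qed.

End Coupling.

(** * Changing the Poisson parameter *)

Lemma exp_neg_lipschitz a b : 0 <= a -> 0 <= b -> Rabs (exp (- a) - exp (- b)) <= Rabs (a - b).
Proof.
  assert (K : forall a b, 0 <= a <= b -> 0 <= exp (- a) - exp (- b) <= b - a).
  { intros a0 b0 [H1 H2].
    assert (exp (- b0) = exp (- a0) * exp (- (b0 - a0))) by (rewrite <- exp_plus; f_equal; ring).
    pose proof (exp_ineq1_le (- (b0 - a0))).
    assert (exp (- a0) <= 1) by (rewrite <- exp_0; apply exp_monotone; lra).
    assert (exp (- (b0 - a0)) <= 1) by (rewrite <- exp_0; apply exp_monotone; lra).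
    pose proof (exp_pos (- a0)). pose proof (exp_pos (- (b0 - a0))).
    split; nra. }
  intros Ha Hb. destruct (Rle_dec a b).
  - destruct (K a b) as [h1 h2]; [lra|].
    rewrite Rabs_pos_eq, Rabs_minus_sym, Rabs_pos_eq; lra.
  - destruct (K b a) as [h1 h2]; [lra|].
    rewrite Rabs_minus_sym, Rabs_pos_eq, Rabs_pos_eq; lra.
Qed.

Lemma pow_diff_bound a b M k : 0 <= a <= M -> 0 <= b <= M ->
  Rabs (a ^ S k - b ^ S k) <= INR (S k) * Rabs (a - b) * M ^ k.
Proof.
  intros Ha Hb. induction k; [simpl; rewrite !Rmult_1_r; lra|].
  replace (a ^ S (S k) - b ^ S (S k)) with (a * (a ^ S k - b ^ S k) + b ^ S k * (a - b))
    by (simpl; ring).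
  eapply Rle_trans; [apply Rabs_triang|]. rewrite !Rabs_mult.
  rewrite (Rabs_pos_eq a), (Rabs_pos_eq (b ^ S k)) by (try apply pow_le; lra).
  assert (b ^ S k <= M ^ S k) by (apply pow_incr; lra).
  pose proof (Rabs_pos (a - b)). pose proof (Rabs_pos (a ^ S k - b ^ S k)).
  assert (0 <= M ^ k) by (apply pow_le; lra).
  assert (a * Rabs (a ^ S k - b ^ S k) <= M * (INR (S k) * Rabs (a - b) * M ^ k))
    by (apply Rmult_le_compat; lra).
  rewrite (S_INR (S k)). simpl pow in *. nra.
Qed.

Definition exp_term (M : R) (k : nat) : R := M ^ k / INR (fact k).
Definition exp_term_shift (M : R) (k : nat) : R :=
  match k with O => 0 | S j => exp_term M j end.

Lemma exp_term_nonneg M k : 0 <= M -> 0 <= exp_term M k.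
Proof.
  intros; unfold exp_term, Rdiv.
  apply Rmult_le_pos; [apply pow_le; auto | left; apply Rinv_0_lt_compat, INR_fact_lt_0].
Qed.

Lemma exp_term_shift_nonneg M k : 0 <= M -> 0 <= exp_term_shift M k.
Proof. intros; destruct k; simpl; [lra | apply exp_term_nonneg; auto]. Qed.

Lemma exp_term_sum_le M N : 0 <= M -> sum_f_R0 (exp_term M) N <= exp M.
Proof.
  intros HM. rewrite (sum_eq _ (fun i => / INR (fact i) * M ^ i)) by (intros; unfold exp_term, Rdiv; ring).
  apply sum_incr; [unfold exp; destruct (exist_exp M) as [l Hl]; exact Hl|].
  intros; apply Rmult_le_pos; [left; apply Rinv_0_lt_compat, INR_fact_lt_0 | apply pow_le; auto].
Qed.

Lemma exp_term_shift_sum_le M N : 0 <= M -> sum_f_R0 (exp_term_shift M) N <= exp M.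
Proof.
  intros HM. destruct N as [|N]; [simpl; pose proof (exp_pos M); lra|].
  replace (sum_f_R0 (exp_term_shift M) (S N)) with (sum_f_R0 (exp_term M) N).
  - apply exp_term_sum_le; auto.
  - induction N; [simpl; ring|]. rewrite tech5, IHN, tech5. reflexivity.
Qed.

Lemma poisson_pmf_diff a b k : 0 <= a -> 0 <= b ->
  Rabs (poisson_pmf a k - poisson_pmf b k)
  <= Rabs (a - b) * (exp_term (Rmax a b) k + exp_term_shift (Rmax a b) k).
Proof.
  intros Ha Hb. set (M := Rmax a b).
  assert (HaM : a <= M) by apply Rmax_l. assert (HbM : b <= M) by apply Rmax_r.
  pose proof (INR_fact_lt_0 k) as Hf.
  unfold poisson_pmf, exp_term.
  replace (exp (- a) * a ^ k / INR (fact k) - exp (- b) * b ^ k / INR (fact k))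
    with (((exp (- a) - exp (- b)) * a ^ k + exp (- b) * (a ^ k - b ^ k)) / INR (fact k))
    by (field; apply INR_fact_neq_0).
  unfold Rdiv. rewrite Rabs_mult, (Rabs_pos_eq (/ _)) by (left; apply Rinv_0_lt_compat; auto).
  assert (H1 : Rabs ((exp (- a) - exp (- b)) * a ^ k) <= Rabs (a - b) * M ^ k).
  { rewrite Rabs_mult, (Rabs_pos_eq (a ^ k)) by (apply pow_le; auto).
    apply Rmult_le_compat; try apply Rabs_pos; [apply pow_le; auto| |apply pow_incr; lra].
    apply exp_neg_lipschitz; auto. }
  assert (H2 : Rabs (exp (- b) * (a ^ k - b ^ k)) <= Rabs (a ^ k - b ^ k)).
  { rewrite Rabs_mult, (Rabs_pos_eq (exp _)) by (left; apply exp_pos).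
    assert (exp (- b) <= 1) by (rewrite <- exp_0; apply exp_monotone; lra).
    pose proof (Rabs_pos (a ^ k - b ^ k)). nra. }
  pose proof (Rabs_triang ((exp (- a) - exp (- b)) * a ^ k) (exp (- b) * (a ^ k - b ^ k))).
  assert (Hi : 0 < / INR (fact k)) by (apply Rinv_0_lt_compat; auto).
  destruct k as [|j].
  - simpl. replace ((exp (- a) - exp (- b)) * 1 + exp (- b) * (1 - 1)) with (exp (- a) - exp (- b)) by ring.
    pose proof (exp_neg_lipschitz a b Ha Hb). rewrite Rinv_1. lra.
  - pose proof (pow_diff_bound a b M j ltac:(lra) ltac:(lra)).
    assert (E : INR (S j) * Rabs (a - b) * M ^ j * / INR (fact (S j))
                = Rabs (a - b) * (M ^ j / INR (fact j))).
    { rewrite fact_simpl, mult_INR. field. split; [apply INR_fact_neq_0 | apply not_0_INR; lia]. }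
    assert (H6 : Rabs ((exp (- a) - exp (- b)) * a ^ S j + exp (- b) * (a ^ S j - b ^ S j))
                   * / INR (fact (S j))
                 <= (Rabs (a - b) * M ^ S j + INR (S j) * Rabs (a - b) * M ^ j)
                   * / INR (fact (S j))) by (apply Rmult_le_compat_r; lra).
    rewrite Rmult_plus_distr_r, E in H6. unfold exp_term_shift, exp_term, Rdiv in *. lra.
Qed.

Lemma poisson_partial_diff a b G N : 0 <= a -> 0 <= b ->
  Rabs (poisson_partial a G N - poisson_partial b G N) <= 2 * Rabs (a - b) * exp (Rmax a b).
Proof.
  intros Ha Hb. set (M := Rmax a b).
  assert (HM : 0 <= M) by (unfold M; pose proof (Rmax_l a b); lra).
  unfold poisson_partial. rewrite <- minus_sum.
  eapply Rle_trans; [apply Rsum_abs|].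
  eapply Rle_trans.
  { apply (sum_Rle _ (fun k => Rabs (a - b) * (exp_term M k + exp_term_shift M k))).
    intros k _. unfold poisson_term. destruct (G k).
    - apply poisson_pmf_diff; auto.
    - rewrite Rminus_diag, Rabs_R0. apply Rmult_le_pos; [apply Rabs_pos|].
      pose proof (exp_term_nonneg M k HM). pose proof (exp_term_shift_nonneg M k HM). lra. }
  rewrite <- (sum_eq (fun k => (exp_term M k + exp_term_shift M k) * Rabs (a - b)))
    by (intros; ring).
  rewrite <- scal_sum, plus_sum.
  pose proof (exp_term_sum_le M N HM). pose proof (exp_term_shift_sum_le M N HM).
  pose proof (Rabs_pos (a - b)). nra.
Qed.

Lemma poisson_parameter_change lam mu G La Lm : 0 < lam -> 0 < mu ->
  infinite_sum (poisson_term lam G) La -> infinite_sum (poisson_term mu G) Lm ->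
  Rabs (Lm - La) <= 2 * Rabs (lam - mu) * exp (Rmax lam mu).
Proof.
  intros Hl Hm HLa HLm.
  apply (cv_le_eventually (fun N => Rabs (poisson_partial mu G N - poisson_partial lam G N)) _ _ 0).
  - apply cv_cvabs, CV_minus; auto.
  - intros N _. rewrite Rmax_comm, (Rabs_minus_sym lam). apply poisson_partial_diff; lra.
Qed.

(** The quantitative bound for a single n: the Stein–Chen bound at
    mu = n p^ell plus the cost of moving the parameter from mu to lam. *)
Lemma poisson_approximation (ell : nat) (q : nat -> nat -> nat)
  (Hell : (1 <= ell)%nat)
  (Hq_incr : forall j l, (j < ell)%nat -> (1 <= l)%nat -> (q j l < q j (S l))%nat)
  (Hq_first : forall l, (1 <= l)%nat -> (l <= q 0%nat l)%nat)
  (Hq_order : forall j l, (S j < ell)%nat -> (1 <= l)%nat -> (q j l < q (S j) l)%nat)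
  (p : R) (Hp : 0 < p < 1) (n : nat) (Hn : (1 <= n)%nat) (lam : R) (Hlam : 0 < lam)
  (Gamma : nat -> bool) :
  exists L : R, infinite_sum (poisson_term lam Gamma) L /\
    Rabs (prob_Sn_in p q ell n Gamma - L)
    <= (2 * INR ell ^ 2 + 1) * p + 2 * Rabs (lam - INR n * p ^ ell) * exp (Rmax lam (INR n * p ^ ell)).
Proof.
  set (mu := INR n * p ^ ell).
  assert (Hmu : 0 < mu) by (apply Rmult_lt_0_compat; [apply lt_0_INR; lia | apply pow_lt; lra]).
  destruct (poisson_sum_exists lam Gamma Hlam) as [La HLa].
  destruct (poisson_sum_exists mu Gamma Hmu) as [Lm HLm].
  exists La. split; auto.
  pose proof (stein_chen_bound ell q Hell Hq_incr Hq_first Hq_order p Hp n Hn Gamma Lm HLm).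
  pose proof (poisson_parameter_change lam mu Gamma La Lm Hlam Hmu HLa HLm).
  assert (p ^ ell <= p).
  { replace ell with (S (ell - 1)) by lia. simpl.
    assert (p ^ (ell - 1) <= 1) by (rewrite <- (pow1 (ell - 1)); apply pow_incr; lra).
    pose proof (pow_le p (ell - 1) ltac:(lra)). nra. }
  assert (0 <= INR ell * INR ell) by (apply Rmult_le_pos; apply pos_INR).
  replace (prob_Sn_in p q ell n Gamma - La)
    with ((prob_Sn_in p q ell n Gamma - Lm) + (Lm - La)) by ring.
  eapply Rle_trans; [apply Rabs_triang|]. simpl pow. nra.
Qed.

Lemma success_prob_vanishes (ell : nat) (p : nat -> R) (lam : R)
  (Hp : forall n, (1 <= n)%nat -> 0 < p n < 1)
  (Hcv : Un_cv (fun n => INR n * p n ^ ell) lam) (delta : R) (Hdelta : 0 < delta) :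
  exists N, forall n, (N <= n)%nat -> (1 <= n)%nat -> p n < delta.
Proof.
  destruct (Hcv 1 Rlt_0_1) as [N1 HN1].
  destruct (INR_unbounded ((lam + 1) / delta ^ ell)) as [N2 HN2].
  exists (max N1 N2). intros n Hn Hn1.
  specialize (HN1 n ltac:(lia)). unfold Rdist in HN1. apply Rabs_def2 in HN1.
  destruct (Rlt_or_le (p n) delta) as [h|h]; auto. exfalso.
  pose proof (Hp n Hn1).
  assert (Hd : 0 < delta ^ ell) by (apply pow_lt; lra).
  assert (delta ^ ell <= p n ^ ell) by (apply pow_incr; lra).
  assert (INR N2 <= INR n) by (apply le_INR; lia).
  assert (lam + 1 < INR N2 * delta ^ ell).
  { apply (Rmult_lt_reg_r (/ delta ^ ell)); [apply Rinv_0_lt_compat; auto|].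
    rewrite Rmult_assoc, Rinv_r, Rmult_1_r by lra. unfold Rdiv in HN2. lra. }
  assert (INR N2 * delta ^ ell <= INR n * p n ^ ell)
    by (apply Rmult_le_compat; try lra; apply pos_INR).
  lra.
Qed.

Lemma error_bound_vanishes (ell : nat) (p : nat -> R) (lam : R)
  (Hp : forall n, (1 <= n)%nat -> 0 < p n < 1)
  (Hcv : Un_cv (fun n => INR n * p n ^ ell) lam) (eps : R) (Heps : 0 < eps) :
  exists N, forall n, (N <= n)%nat -> (1 <= n)%nat ->
    (2 * INR ell ^ 2 + 1) * p n
    + 2 * Rabs (lam - INR n * p n ^ ell) * exp (Rmax lam (INR n * p n ^ ell)) < eps.
Proof.
  set (c := 2 * INR ell ^ 2 + 1).
  assert (Hc : 0 < c) by (unfold c; pose proof (pow_le (INR ell) 2 (pos_INR ell)); lra).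
  set (eta := Rmin 1 (eps / (4 * exp (lam + 1)))).
  assert (Heta : 0 < eta).
  { apply Rmin_pos; [lra|]. apply Rdiv_lt_0_compat; [lra|]. pose proof (exp_pos (lam + 1)); lra. }
  destruct (success_prob_vanishes ell p lam Hp Hcv (eps / (2 * c))) as [N1 HN1].
  { apply Rdiv_lt_0_compat; lra. }
  destruct (Hcv eta Heta) as [N2 HN2].
  exists (max N1 N2). intros n Hn Hn1.
  specialize (HN1 n ltac:(lia) Hn1). specialize (HN2 n ltac:(lia)). unfold Rdist in HN2.
  set (mu := INR n * p n ^ ell) in *.
  assert (Hclose : Rabs (lam - mu) < eta) by (rewrite Rabs_minus_sym; auto).
  assert (eta <= 1) by apply Rmin_l.
  assert (Heta2 : eta * exp (lam + 1) <= eps / 4).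
  { pose proof (exp_pos (lam + 1)).
    apply Rle_trans with (eps / (4 * exp (lam + 1)) * exp (lam + 1)).
    - apply Rmult_le_compat_r; [lra | apply Rmin_r].
    - right; field; lra. }
  assert (Hexp : exp (Rmax lam mu) <= exp (lam + 1)).
  { apply exp_monotone, Rmax_lub; [lra|]. apply Rabs_def2 in Hclose. lra. }
  assert (c * p n < eps / 2).
  { apply (Rmult_lt_compat_l c) in HN1; auto.
    replace (c * (eps / (2 * c))) with (eps / 2) in HN1 by (field; lra). lra. }
  assert (Rabs (lam - mu) * exp (Rmax lam mu) < eta * exp (lam + 1)).
  { pose proof (exp_pos (Rmax lam mu)). pose proof (Rabs_pos (lam - mu)).
    apply Rle_lt_trans with (Rabs (lam - mu) * exp (lam + 1));
      [apply Rmult_le_compat_l; auto | apply Rmult_lt_compat_r; auto; apply exp_pos]. }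
  lra.
Qed.

Theorem theorem2p1 (ell : nat) (q : nat -> nat -> nat) (p : nat -> R)
  (Hell : (1 <= ell)%nat)
  (Hq_incr : forall j l, (j < ell)%nat -> (1 <= l)%nat -> (q j l < q j (S l))%nat)
  (Hq_first : forall l, (1 <= l)%nat -> (l <= q 0%nat l)%nat)
  (Hq_order : forall j l, (S j < ell)%nat -> (1 <= l)%nat -> (q j l < q (S j) l)%nat)
  (Hp : forall n, (1 <= n)%nat -> 0 < p n < 1) :
  (forall (lam : R), 0 < lam -> forall n : nat, (1 <= n)%nat ->
     forall Gamma : nat -> bool,
       exists L : R, infinite_sum (poisson_term lam Gamma) L /\
         Rabs (prob_Sn_in (p n) q ell n Gamma - L)
         <= (2 * INR ell ^ 2 + 1) * p n
            + 2 * Rabs (lam - INR n * p n ^ ell)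
                * exp (Rmax lam (INR n * p n ^ ell)))
  /\
  (forall lam : R, 0 < lam ->
     Un_cv (fun n => INR n * p n ^ ell) lam ->
     forall eps : R, 0 < eps -> exists N : nat, forall n : nat, (N <= n)%nat ->
       (1 <= n)%nat ->
       forall (Gamma : nat -> bool) (L : R),
         infinite_sum (poisson_term lam Gamma) L ->
         Rabs (prob_Sn_in (p n) q ell n Gamma - L) < eps).
Proof.
  split.
  - intros lam Hlam n Hn Gamma.
    apply poisson_approximation; auto.
  - intros lam Hlam Hcv eps Heps.
    destruct (error_bound_vanishes ell p lam Hp Hcv eps Heps) as [N HN].
    exists N. intros n HnN Hn Gamma L HL.
    destruct (poisson_approximation ell q Hell Hq_incr Hq_first Hq_order (p n) (Hp n Hn)
                n Hn lam Hlam Gamma) as (L' & HL' & Hbound).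
    rewrite (uniqueness_sum _ _ _ HL HL').
    eapply Rle_lt_trans; [exact Hbound | apply HN; auto].
Qed.
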